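(* Let $T$ be an isometry of a compact metric space $(X,d)$ and let $\mu$ be an ergodic $T$-invariant Borel probability. Then for all $\alpha\in(1,\infty)$, $\delta>0$, $\kappa>\kappa'>0$ and $N\in\mathbb{N}$, \[\min_{\mu'}\max_{U:\,\mu'(U)\ge\kappa}\mathrm{cov}_{\kappa'}((U,d,\mu'),2\delta)\ \le\ \mathrm{BICOV}_{\alpha,\kappa,\kappa',\delta N}\big(X,d^{\mathbf{X}}_{[-N;0)},d^{\mathbf{X}}_{[0;N)},\mu\big)\ \le\ \min_{\mu'}\max_{U:\,\mu'(U)\ge\kappa}\mathrm{cov}_{\kappa'}((U,d,\mu'),\delta),\] where in both outer expressions the minimum is over Borel probabilities $\mu'$ on $X$ with $\|d\mu'/d\mu\|_\infty\le\alpha$ and the maximum over Borel $U\subseteq X$.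
   Context: $d^{\mathbf{X}}_F(x,x')=\sum_{n\in F}d(T^nx,T^nx')$. $B^d_r(x)=\{y:d(x,y)<r\}$, $B^d_r(F)=\bigcup_{x\in F}B^d_r(x)$. For $U\subseteq X$ and a measure $\mu'$, $\mathrm{cov}_a((U,d,\mu'),r)=\min\{|F|:F\subseteq U,\ \mu'(U\cap B^d_r(F))>a\}$. $\mathrm{bicov}_a((X,d_1,d_2,\mu),\delta)=\min\{|F|:F\subseteq X,\ \mu(B^{d_2}_\delta(B^{d_1}_\delta(F)))>a\}$, and for $U\subseteq X$, $(U,d_1,d_2,\mu')$ means $U$ with restricted pseudometrics (balls inside $U$) and unnormalized restriction of $\mu'$. $\mathrm{BICOV}_{\alpha,\kappa,\kappa',\delta}(X,d_1,d_2,\mu)=\min_{\mu'}\max_{U:\mu'(U)\ge\kappa}\mathrm{bicov}_{\kappa'}((U,d_1,d_2,\mu'),\delta)$, min over Borel probabilities $\mu'$ with $\|d\mu'/d\mu\|_\infty\le\alpha$, max over Borel $U$. *)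

From HB Require Import structures.
From mathcomp Require Import all_boot all_order all_algebra.
From mathcomp Require Import finmap.
From mathcomp Require Import all_classical all_reals all_analysis.
Set Implicit Arguments. Unset Strict Implicit. Unset Printing Implicit Defensive.
Import Order.TTheory GRing.Theory Num.Theory.
Local Open Scope classical_set_scope.
Local Open Scope ring_scope.

Section Defs.
Context {R : realType}.

Definition is_metric (X : Type) (d : X -> X -> R) : Prop :=
  [/\ forall x y, 0 <= d x y,
      forall x y, d x y = 0 <-> x = y,
      forall x y, d x y = d y x &
      forall x y z, d x z <= d x y + d y z].

Definition dball (X : Type) (d : X -> X -> R) (r : R) (x : X) : set X :=
  [set y | d x y < r].

Definition dballs (X : Type) (d : X -> X -> R) (r : R) (F : set X) : set X :=
  \bigcup_(x in F) dball d r x.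

Definition d_open (X : Type) (d : X -> X -> R) (A : set X) : Prop :=
  forall x, A x -> exists2 r : R, 0 < r & dball d r x `<=` A.

Definition d_compact (X : Type) (d : X -> X -> R) : Prop :=
  forall (I : Type) (G : I -> set X), (forall i, d_open d (G i)) ->
    setT `<=` \bigcup_(i in setT) G i ->
    exists J : set I, finite_set J /\ setT `<=` \bigcup_(i in J) G i.

Definition borel_for (dsp : measure_display) (X : measurableType dsp)
    (d : X -> X -> R) : Prop :=
  (@measurable dsp X) = <<s [set A | d_open d A] >>.

Definition Tpow (X : Type) (T Tinv : X -> X) (n : int) : X -> X :=
  match n with
  | Posz k => iter k T
  | Negz k => iter k.+1 Tinv
  end.

Definition dX (X : Type) (T Tinv : X -> X) (d : X -> X -> R) (F : seq int)
    (x x' : X) : R :=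
  \sum_(n <- F) d (Tpow T Tinv n x) (Tpow T Tinv n x').

(* the integer intervals [-N;0) = {-N,...,-1} and [0;N) = {0,...,N-1} *)
Definition zint_neg (N : nat) : seq int := [seq - (k%:Z) | k <- iota 1 N].
Definition zint_pos (N : nat) : seq int := [seq k%:Z | k <- iota 0 N].

Definition T_invariant dsp (X : measurableType dsp) (T : X -> X)
    (mu : set X -> \bar R) : Prop :=
  forall A, measurable A -> mu (T @^-1` A) = mu A.

Definition T_ergodic dsp (X : measurableType dsp) (T : X -> X)
    (mu : set X -> \bar R) : Prop :=
  forall A, measurable A -> T @^-1` A = A -> mu A = 0%E \/ mu A = 1%E.

(* || d mu' / d mu ||_oo <= alpha : mu' has a density f w.r.t. mu
   (i.e. mu' << mu, f = d mu'/d mu) whose mu-essential sup is <= alpha *)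
Definition density_le dsp (X : measurableType dsp) (mu mu' : set X -> \bar R)
    (alpha : R) : Prop :=
  exists f : X -> R,
    [/\ measurable_fun setT f,
        forall x, 0 <= f x,
        {ae mu, forall x, f x <= alpha} &
        forall A, measurable A -> mu' A = (\int[mu]_(x in A) (f x)%:E)%E].

(* cov_a((U,d,mu'),r) = min{|F| : F ⊆ U, mu'(U ∩ B^d_r(F)) > a};
   balls are taken in the restricted space U. +oo if no such F. *)
Definition cov (X : choiceType) (U : set X) (d : X -> X -> R) (mu' : set X -> \bar R)
    (a r : R) : \bar R :=
  ereal_inf [set (#|` F|)%fset%:R%:E | F in
     [set F : {fset X} | [set` F] `<=` U /\ (a%:E < mu' (U `&` dballs d r [set` F]))%E]].

(* bicov_a((U,d1,d2,mu'),delta)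
   = min{|F| : F ⊆ U, mu'(B^{d2}_delta(B^{d1}_delta(F))) > a},
   with balls inside U (restricted pseudometrics). *)
Definition bicov (X : choiceType) (U : set X) (d1 d2 : X -> X -> R)
    (mu' : set X -> \bar R) (a delta : R) : \bar R :=
  ereal_inf [set (#|` F|)%fset%:R%:E | F in
     [set F : {fset X} | [set` F] `<=` U /\
        (a%:E < mu' (U `&` dballs d2 delta (U `&` dballs d1 delta [set` F])))%E]].

Definition minmax dsp (X : measurableType dsp) (mu : probability X R)
    (alpha kappa : R) (Q : set X -> (set X -> \bar R) -> \bar R) : \bar R :=
  ereal_inf [set ereal_sup [set Q U mu' | U in
                 [set U : set X | measurable U /\ (kappa%:E <= mu' U)%E]]
            | mu' in [set mu' : probability X R | density_le mu mu' alpha]].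

Definition BICOV dsp (X : measurableType dsp) (alpha kappa kappa' delta : R)
    (d1 d2 : X -> X -> R) (mu : probability X R) : \bar R :=
  minmax mu alpha kappa (fun U mu' => bicov U d1 d2 mu' kappa' delta).

End Defs.

(* For an isometry T, every iterate T^n preserves d, so both dynamical
   metrics d^X_[-N;0) and d^X_[0;N) equal N·d, and their balls of radius
   N·delta are the d-balls of radius delta.  The bicovering number then only
   involves d: a point within delta of a point within delta of F is within
   2 delta of F, which gives the lower bound, and F lies in its own delta-
   neighbourhood, which gives the upper bound. *)
From HB Require Import structures.
From mathcomp Require Import all_boot all_order all_algebra.
From mathcomp Require Import all_classical all_reals all_analysis.
From mathcomp Require Import lra.
Set Implicit Arguments. Unset Strict Implicit. Unset Printing Implicit Defensive.
Import Order.TTheory GRing.Theory Num.Theory.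
Local Open Scope classical_set_scope.
Local Open Scope ring_scope.

Section MinMax.
Variables (R : realType) (dsp : measure_display) (X : measurableType dsp).

Lemma minmax_le (mu : probability X R) (alpha kappa : R)
    (Q1 Q2 : set X -> (set X -> \bar R) -> \bar R) :
  (forall U (mu' : probability X R), measurable U -> (Q1 U mu' <= Q2 U mu')%E) ->
  (minmax mu alpha kappa Q1 <= minmax mu alpha kappa Q2)%E.
Proof.
move=> Q12; apply/ereal_infP => _ [mu' mu'_dens <-].
apply: (@le_trans _ _ (ereal_sup [set Q1 U mu' | U in
    [set U : set X | measurable U /\ (kappa%:E <= mu' U)%E]])).
  by apply: ereal_inf_lbound; exists mu'.
apply/ereal_supP => _ [U [mU kappaU] <-].
apply: le_trans (Q12 U mu' mU) _.
by apply: ereal_sup_ubound; exists U.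
Qed.

End MinMax.

Section Balls.
Variables (R : realType) (X : Type) (d : X -> X -> R).

Lemma dballs_scale (c r : R) (A : set X) : 0 < c ->
  dballs (fun x y => c * d x y) (r * c) A = dballs d r A.
Proof.
move=> c_gt0; apply/seteqP; split=> y [x Ax ballxy]; exists x => //;
  by move: ballxy; rewrite /dball /= [r * c]mulrC ltr_pM2l.
Qed.

Hypothesis d_triangle : forall x y z, d x z <= d x y + d y z.

Lemma d_open_dball (r : R) (x : X) : d_open d (dball d r x).
Proof.
move=> y; rewrite /dball /= => dxy_lt.
exists (r - d x y); first by rewrite subr_gt0.
move=> z; rewrite /dball /= => dyz_lt.
by apply: le_lt_trans (d_triangle x y z) _; rewrite -ltrBrDl.
Qed.

Lemma dballs_dballs_sub (r : R) (U A : set X) :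
  dballs d r (U `&` dballs d r A) `<=` dballs d (2 * r) A.
Proof.
move=> y [z [_ [x Ax dxz]] dzy]; exists x => //.
rewrite /dball /= in dxz dzy *.
by apply: le_lt_trans (d_triangle x z y) _; lra.
Qed.

End Balls.

Section Covering.
Variables (R : realType) (dsp : measure_display) (X : measurableType dsp).
Variables (d : X -> X -> R) (mu' : {measure set X -> \bar R}).
Hypothesis d_triangle : forall x y z, d x z <= d x y + d y z.
Hypothesis d_borel : borel_for d.

Lemma measurable_dballs (r : R) (A : set X) : measurable (dballs d r A).
Proof.
rewrite d_borel; apply: sub_gen_smallest => y [x Ax dxy].
have [e e_gt0 ballxy] := d_open_dball d_triangle dxy.
by exists e => // z /ballxy; exists x.
Qed.

Lemma cov_le_bicov (U : set X) (a r : R) : measurable U ->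
  (cov U d mu' a (2 * r) <= bicov U d d mu' a r)%E.
Proof.
move=> mU; apply/ereal_infP => _ [F [FU a_lt] <-].
apply: ereal_inf_lbound; exists F => //; split => //.
apply: (lt_le_trans a_lt); apply: le_measure; rewrite ?inE.
- by apply: measurableI => //; apply: measurable_dballs.
- by apply: measurableI => //; apply: measurable_dballs.
by move=> y [Uy ballFy]; split => //; apply: dballs_dballs_sub ballFy.
Qed.

Hypothesis d_refl : forall x, d x x = 0.

Lemma bicov_le_cov (U : set X) (a r : R) : 0 < r -> measurable U ->
  (bicov U d d mu' a r <= cov U d mu' a r)%E.
Proof.
move=> r_gt0 mU; apply/ereal_infP => _ [F [FU a_lt] <-].
apply: ereal_inf_lbound; exists F => //; split => //.
apply: (lt_le_trans a_lt); apply: le_measure; rewrite ?inE.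
- by apply: measurableI => //; apply: measurable_dballs.
- by apply: measurableI => //; apply: measurable_dballs.
by move=> y [Uy ballFy]; split => //; exists y => //; rewrite /dball /= d_refl.
Qed.

End Covering.

Section Isometry.
Variables (R : realType) (X : Type) (d : X -> X -> R) (T Tinv : X -> X).
Hypothesis T_isometry : forall x y, d (T x) (T y) = d x y.
Hypothesis TinvK : cancel Tinv T.

Lemma Tpow_isometry (n : int) (x y : X) :
  d (Tpow T Tinv n x) (Tpow T Tinv n y) = d x y.
Proof.
have Tinv_isometry x' y' : d (Tinv x') (Tinv y') = d x' y'.
  by rewrite -T_isometry !TinvK.
case: n => k /=; last rewrite Tinv_isometry.
  by elim: k => //= k IHk; rewrite T_isometry.
by elim: k => //= k IHk; rewrite Tinv_isometry.
Qed.

Lemma dX_isometry (s : seq int) :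
  dX T Tinv d s = fun x y => (size s)%:R * d x y.
Proof.
apply/funext => x; apply/funext => y; rewrite /dX.
elim: s => [|n s IHs]; first by rewrite big_nil mul0r.
by rewrite big_cons IHs Tpow_isometry /= -add1n natrD mulrDl mul1r.
Qed.

End Isometry.

Theorem mainTheorem7 (R : realType) (dsp : measure_display)
    (X : measurableType dsp) (d : X -> X -> R) (T Tinv : X -> X)
    (mu : probability X R)
    (alpha delta kappa kappa' : R) (N : nat) :
  is_metric d -> d_compact d -> borel_for d ->
  (forall x y, d (T x) (T y) = d x y) ->
  cancel T Tinv -> cancel Tinv T ->
  T_invariant T mu -> T_ergodic T mu ->
  1 < alpha -> 0 < delta -> 0 < kappa' -> kappa' < kappa -> (0 < N)%N ->
  (minmax mu alpha kappa (fun U mu' => cov U d mu' kappa' (2 * delta))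
     <= BICOV alpha kappa kappa' (delta * N%:R)
          (dX T Tinv d (zint_neg N)) (dX T Tinv d (zint_pos N)) mu
   /\ BICOV alpha kappa kappa' (delta * N%:R)
          (dX T Tinv d (zint_neg N)) (dX T Tinv d (zint_pos N)) mu
     <= minmax mu alpha kappa (fun U mu' => cov U d mu' kappa' delta))%E.
Proof.
move=> [_ d_eq0 _ d_triangle] _ d_borel T_isometry _ TinvK _ _ _ delta_gt0 _ _ N_gt0.
have d_refl x : d x x = 0 by apply/d_eq0.
rewrite /BICOV !dX_isometry // !size_map !size_iota.
have N_gt0' : 0 < N%:R :> R by rewrite ltr0n.
have bicov_dX U (mu' : set X -> \bar R) :
    bicov U (fun x y => N%:R * d x y) (fun x y => N%:R * d x y) mu' kappa'
      (delta * N%:R) = bicov U d d mu' kappa' delta.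
  by rewrite /bicov; under eq_fun do rewrite !dballs_scale //.
by split; apply: minmax_le => U mu' mU /=; rewrite bicov_dX;
  [apply: cov_le_bicov | apply: bicov_le_cov].
Qed.
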